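(* For each positive integer $k$, the graph $K_{k+1,\lfloor (k+1)^2/4\rfloor}$ admits a balanced $k$-page embedding.
   Context: A book with $k$ pages consists of a line (the spine) and $k$ half-planes (the pages) whose common boundary is the spine. A $k$-page embedding places all vertices on the spine and each edge inside a single page with no crossings. In $K_{k+1,s}$ call the $k+1$ vertices of degree $s$ black and the $s$ vertices of degree $k+1$ white. The load of a white vertex $v$ in a page is the number of edges incident with $v$ drawn in that page. A $k$-page embedding of $K_{k+1,s}$ is balanced if every white vertex has load exactly $1$ in $k-1$ of the pages (hence load $2$ in the remaining page). *)

From mathcomp Require Import all_boot.
Set Implicit Arguments. Unset Strict Implicit. Unset Printing Implicit Defensive.

(* Vertices of K_{k+1,s}: black vertices 'I_(k+1) (inl), white vertices 'I_s (inr).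
   Every edge joins a black vertex i and a white vertex j; we identify the edge
   with the pair (i, j). *)
Definition Kvertex (k s : nat) := ('I_k.+1 + 'I_s)%type.

(* Two edges with spine positions {a,b} and {c,d} cross (in the same page)
   iff their endpoints strictly interleave along the spine. *)
Definition interleave (a b c d : nat) : bool :=
  let: (l1, r1) := (minn a b, maxn a b) in
  let: (l2, r2) := (minn c d, maxn c d) in
  ((l1 < l2) && (l2 < r1) && (r1 < r2)) || ((l2 < l1) && (l1 < r2) && (r2 < r1)).

Definition book_embedding (k s : nat) (pos : Kvertex k s -> nat)
    (page : 'I_k.+1 -> 'I_s -> 'I_k) : Prop :=
  injective pos /\
  forall (i1 i2 : 'I_k.+1) (j1 j2 : 'I_s),
    page i1 j1 = page i2 j2 ->
    ~~ interleave (pos (inl i1)) (pos (inr j1)) (pos (inl i2)) (pos (inr j2)).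

Definition load (k s : nat) (page : 'I_k.+1 -> 'I_s -> 'I_k) (j : 'I_s) (p : 'I_k)
  : nat := #|[set i : 'I_k.+1 | page i j == p]|.

Definition balanced (k s : nat) (page : 'I_k.+1 -> 'I_s -> 'I_k) : Prop :=
  forall j : 'I_s, #|[set p : 'I_k | load page j p == 1]| = k.-1.

From mathcomp Require Import all_boot zify.

Set Implicit Arguments.
Unset Strict Implicit.
Unset Printing Implicit Defensive.

(** With K = k + 1 black vertices put x = K/2 (rounded down) "near" black
   vertices b_0, ..., b_x at the start of the spine, followed by K - x blocks of
   x white vertices each (K^2/4 <= (K - x) x), the block W_(u-1) being separated
   from W_u by the "far" black vertex b_(x+u).  The j-th white vertex of W_t
   joins b_i (i <= x) in page t + i if i <= j and t + i - 1 otherwise, so b_j and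
   b_(j+1) share page t + j; the far vertices b_(x+u) with u <= t use pages
   0, ..., t - 1 and the others pages t + x, ..., K - 2.  Every white vertex thus
   has load 2 in page t + j and load 1 elsewhere, and two edges in a common page
   are always nested or disjoint along the spine. *)

Ltac cases_lia :=
  repeat (case: ifP => ?); intros;
  repeat match goal with H : _ \/ _ |- _ => destruct H as [H|H] end;
  repeat match goal with H : _ /\ _ |- _ => destruct H end;
  subst; lia.

Section Pages.
Variable x : nat.

Definition page_of i t j :=
  if i <= x then (if i <= j then t + i else t + i - 1)
  else (if i - x <= t then i - x - 1 else x - 1 + (i - x)).

Definition page_preimage t j q :=
  if q < t then x + q + 1 else if q <= t + j then q - t
  else if q < t + x then q - t + 1 else q + 1.

Lemma page_of_lt K i t j : i < K -> t < K - x -> j < x -> page_of i t j < K.-1.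
Proof. rewrite /page_of; cases_lia. Qed.

Lemma page_preimage_lt K t j q : t < K - x -> j < x -> q < K.-1 -> page_preimage t j q < K.
Proof. rewrite /page_preimage; cases_lia. Qed.

Lemma page_ofE K i t j q : t < K - x -> j < x -> i < K -> q < K.-1 -> q <> t + j ->
  (page_of i t j == q) = (i == page_preimage t j q).
Proof. by move=> *; apply/eqP/eqP; rewrite /page_of /page_preimage; cases_lia. Qed.

Lemma page_of_double K i t j : t < K - x -> j < x -> i < K ->
  (page_of i t j == t + j) = (i == j) || (i == j.+1).
Proof. by move=> *; rewrite /page_of; repeat case: ifP => ?; apply/idP/idP; lia. Qed.

Lemma page_of_far_eq i1 i2 t1 t2 j1 j2 : 0 < x -> x < i1 -> x < i2 ->
  page_of i1 t1 j1 = page_of i2 t2 j2 ->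
  i1 = i2 \/ (i1 - x <= t1 /\ t2 < i2 - x /\ i1 - x = i2 - x + x)
          \/ (i2 - x <= t2 /\ t1 < i1 - x /\ i2 - x = i1 - x + x).
Proof. by move=> x_pos h1 h2; rewrite /page_of; repeat case: ifP => ?; lia. Qed.

End Pages.

(* Block t of white vertices starts at A t; only the gaps between block starts
   matter, and leaving A abstract keeps every case analysis linear. *)
Section SpineLayout.
Variables (x : nat) (A : nat -> nat).
Hypotheses (A_spaced : forall a b, a < b -> A a + x.+1 <= A b) (A0 : x.+1 <= A 0).

Lemma A_cmp a b :
  (a < b /\ A a + x.+1 <= A b) \/ (a = b /\ A a = A b) \/ (b < a /\ A b + x.+1 <= A a).
Proof. by case: (ltngtP a b) => h; [left|right; right|right; left]; auto. Qed.

Lemma x_lt_A a : x < A a.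
Proof. by case: a => [//|a]; have := A_spaced (ltn0Sn a); lia. Qed.

Definition black_pos i := if i <= x then i else A (i - x) - 1.

Definition white_pos t j := A t + j.

Lemma black_pos_inj : injective black_pos.
Proof.
move=> i1 i2; rewrite /black_pos; have := x_lt_A (i1 - x); have := x_lt_A (i2 - x).
have := A_cmp (i1 - x) (i2 - x); cases_lia.
Qed.

Lemma white_pos_inj t1 t2 j1 j2 : j1 < x -> j2 < x ->
  white_pos t1 j1 = white_pos t2 j2 -> t1 = t2 /\ j1 = j2.
Proof. rewrite /white_pos; have := A_cmp t1 t2; cases_lia. Qed.

Lemma black_pos_neq_white i t j : j < x -> black_pos i <> white_pos t j.
Proof.
rewrite /black_pos /white_pos; have := x_lt_A (i - x); have := x_lt_A t.
have := A_cmp (i - x) t; cases_lia.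
Qed.

Lemma interleaveC a b c d : interleave a b c d = interleave c d a b.
Proof. by rewrite /interleave orbC. Qed.

Lemma A_mono : {homo A : a b / a <= b}.
Proof. by move=> a b; rewrite leq_eqVlt => /orP[/eqP -> //|/A_spaced]; lia. Qed.

Lemma page_of_noncrossing i1 i2 t1 t2 j1 j2 : j1 < x -> j2 < x ->
  page_of x i1 t1 j1 = page_of x i2 t2 j2 ->
  ~~ interleave (black_pos i1) (white_pos t1 j1) (black_pos i2) (white_pos t2 j2).
Proof.
wlog le_i : i1 i2 t1 t2 j1 j2 / i1 <= i2.
  move=> hwlog lt_j1 lt_j2 same_page; case: (leqP i1 i2) => [le_i|/ltnW le_i].
    exact: hwlog.
  by rewrite interleaveC; apply: hwlog.
move=> lt_j1 lt_j2 same_page.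
case: (leqP i1 x) => h1; case: (leqP i2 x) => h2.
- move: same_page; rewrite /page_of /black_pos /white_pos /interleave h1 h2.
  have := A_cmp t1 t2; have := x_lt_A t1; have := x_lt_A t2; cases_lia.
- move: same_page; rewrite /page_of /black_pos /white_pos /interleave h1 (leqNgt i2) h2 /=.
  have := A_cmp t1 t2; have := A_cmp (i2 - x) t1; have := A_cmp (i2 - x) t2.
  have := x_lt_A t1; have := x_lt_A t2; have := x_lt_A (i2 - x); cases_lia.
- lia.
have x_pos : 0 < x by case: x lt_j1.
case: (page_of_far_eq x_pos h1 h2 same_page) => [->|[[_ [_ e]]|[le2 [lt1 e]]]].
- by rewrite /interleave /=; lia.
- lia.
rewrite /black_pos /white_pos /interleave (leqNgt i1) (leqNgt i2) h1 h2 /=.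
have := A_spaced lt1; have := @A_spaced (i1 - x) (i2 - x) ltac:(lia).
have := A_mono le2; have := x_lt_A (i1 - x); lia.
Qed.

End SpineLayout.

Lemma sq_div4_le K : K ^ 2 %/ 4 <= (K - K %/ 2) * (K %/ 2).
Proof. nia. Qed.

Section BalancedEmbedding.
Variable k : nat.
Local Notation K := k.+2.
Local Notation s := (K ^ 2 %/ 4).

Let x := K %/ 2.
Let A t := t.+1 * x.+1.

Let x_pos : 0 < x. Proof. rewrite /x; lia. Qed.

Let A_spaced a b : a < b -> A a + x.+1 <= A b.
Proof. rewrite /A; nia. Qed.

Let A0 : x.+1 <= A 0. Proof. by rewrite /A mul1n. Qed.

Let block_lt (w : 'I_s) : w %/ x < K - x.
Proof.
rewrite ltn_divLR //; apply: leq_trans (ltn_ord w) _; exact: sq_div4_le.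
Qed.

Let offset_lt (w : 'I_s) : w %% x < x. Proof. by rewrite ltn_pmod. Qed.

Definition spine_pos (v : Kvertex k.+1 s) : nat :=
  match v with
  | inl i => black_pos x A i
  | inr w => white_pos A (w %/ x) (w %% x)
  end.

Definition book_page (i : 'I_K) (w : 'I_s) : 'I_k.+1 :=
  inord (page_of x i (w %/ x) (w %% x)).

Lemma book_pageE i w : val (book_page i w) = page_of x i (w %/ x) (w %% x).
Proof. exact: inordK (page_of_lt (ltn_ord i) (block_lt w) (offset_lt w)). Qed.

Lemma spine_pos_inj : injective spine_pos.
Proof.
move=> [i1|w1] [i2|w2] /= eq_pos.
- by congr inl; apply: val_inj; exact: black_pos_inj A_spaced A0 _ _ eq_pos.
- by case: (black_pos_neq_white A_spaced A0 (offset_lt w2) eq_pos).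
- by case: (black_pos_neq_white A_spaced A0 (offset_lt w1) (esym eq_pos)).
- have [eq_blk eq_off] := white_pos_inj A_spaced A0 (offset_lt w1) (offset_lt w2) eq_pos.
  by congr inr; apply: val_inj; rewrite /= (divn_eq w1 x) (divn_eq w2 x) eq_blk eq_off.
Qed.

Lemma book_embedding_spine : book_embedding spine_pos book_page.
Proof.
split; first exact: spine_pos_inj.
move=> i1 i2 j1 j2 /(congr1 val); rewrite !book_pageE => same_page.
exact: (page_of_noncrossing A_spaced A0 (offset_lt j1) (offset_lt j2) same_page).
Qed.

Lemma load_book_page w p :
  load book_page w p = (val p == w %/ x + w %% x).+1.
Proof.
rewrite /load; case: eqP => [p_double|p_single].
  have -> : [set i | book_page i w == p] = [set inord (w %% x); inord (w %% x).+1].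
    apply/setP => i; rewrite !inE -!val_eqE book_pageE p_double /= !inordK;
      try by have := offset_lt w; lia.
    exact: page_of_double (block_lt w) (offset_lt w) (ltn_ord i).
  by rewrite cards2 -val_eqE /= !inordK ?eqn_leq ?ltnn ?andbF //; have := offset_lt w; lia.
have pre_lt := page_preimage_lt (block_lt w) (offset_lt w) (ltn_ord p).
have -> : [set i | book_page i w == p] = [set inord (page_preimage x (w %/ x) (w %% x) p)].
  apply/setP => i; rewrite !inE -!val_eqE book_pageE /= inordK //.
  exact: page_ofE (block_lt w) (offset_lt w) (ltn_ord i) (ltn_ord p) p_single.
by rewrite cards1.
Qed.

Lemma balanced_book_page : balanced book_page.
Proof.
move=> w; pose q : 'I_k.+1 := inord (w %/ x + w %% x).
have q_val : val q = w %/ x + w %% x.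
  by apply: inordK; have := block_lt w; have := offset_lt w; lia.
have -> : [set p | load book_page w p == 1] = [set~ q].
  by apply/setP => p; rewrite !inE load_book_page -val_eqE q_val; case: (val p == _).
by rewrite cardsC1 card_ord.
Qed.

End BalancedEmbedding.

Theorem proposition19 (k : nat) (hk : 0 < k) :
  exists (pos : Kvertex k ((k.+1 ^ 2) %/ 4) -> nat)
         (page : 'I_k.+1 -> 'I_((k.+1 ^ 2) %/ 4) -> 'I_k),
    book_embedding pos page /\ balanced page.
Proof.
case: k hk => [//|k] _.
exists (@spine_pos k), (@book_page k).
by split; [exact: book_embedding_spine | exact: balanced_book_page].
Qed.
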